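(* Let $\mathcal{H}=(V,\mathcal{A})$ be a multi-head HyTN in which every node of $V$ is the tail of at least one hyperarc, and let $G_{\mathcal{H}}$ be its associated mean payoff game. If $\mathcal{H}$ is consistent, then every node of $G_{\mathcal{H}}$ is a winning start position for Player 1.
   Context: A multi-head HyTN is a pair $\mathcal{H}=(V,\mathcal{A})$, $V$ a finite node set, $\mathcal{A}$ a finite set of hyperarcs $A=(t_A,H_A,w_A)$ with tail $t_A\in V$, nonempty head set $H_A\subseteq V\setminus\{t_A\}$ and weights $w_A(v)\in\mathbb{R}$ for $v\in H_A$. A scheduling $s:V\to\mathbb{R}$ is feasible if $s(t_A)\ge\min_{v\in H_A}\{s(v)-w_A(v)\}$ for all $A\in\mathcal{A}$; $\mathcal{H}$ is consistent if a feasible scheduling exists. A mean payoff game (MPG) is a finite directed graph with real arc weights whose node set is partitioned into $V_0$ (nodes of Player 0) and $V_1$ (nodes of Player 1), where every node has at least one outgoing arc. A play from a start node $v_0$ proceeds in moves: when the pebble is at $v_{t-1}\in V_p$, Player $p$ chooses an arc $e_t$ leaving $v_{t-1}$ and the pebble moves to its head $v_t$. The play ends at the first $t$ such that $v_t=v_{t'}$ for some $t'<t$; Player 0 wins if $\frac{1}{t-t'}\sum_{i=t'+1}^{t}w(e_i)<0$, otherwise Player 1 wins. A strategy for Player $p$ maps each history ending in a node of $V_p$ to an outgoing arc of that node. A node $s$ is a winning start position for Player 1 if Player 1 has a strategy such that every play starting at $s$ in which Player 1 follows it is won by Player 1. The associated game $G_{\mathcal{H}}$ has $V_0=V$, $V_1=\mathcal{A}$,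 and arc set $\{(t_A,A,0)\mid A\in\mathcal{A}\}\cup\{(A,h,w_A(h))\mid A\in\mathcal{A},h\in H_A\}$ (an arc $(x,y,w)$ goes from $x$ to $y$ with weight $w$). *)

From HB Require Import structures.
From mathcomp Require Import all_boot all_order all_algebra.
Set Implicit Arguments. Unset Strict Implicit. Unset Printing Implicit Defensive.
Import Order.TTheory GRing.Theory Num.Theory.
Local Open Scope ring_scope.

Definition arc (N : finType) (R : realFieldType) : Type := (N * N * R)%type.
Definition asrc {N : finType} {R : realFieldType} (e : arc N R) : N := e.1.1.
Definition adst {N : finType} {R : realFieldType} (e : arc N R) : N := e.1.2.
Definition awt  {N : finType} {R : realFieldType} (e : arc N R) : R := e.2.

(* A mean payoff game: nodes N, the nodes of Player 1 (V_1 = owner1, V_0 its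
   complement), and a finite set (list) of arcs. *)
Record MPG (R : realFieldType) := {
  mpg_node : finType;
  mpg_owner1 : pred mpg_node;
  mpg_arcs : seq (arc mpg_node R)
}.

Section Game.
Variable R : realFieldType.
Variable G : MPG R.
Local Notation N := (mpg_node G).
Local Notation A := (arc N R).

Definition mpg_wf : Prop :=
  forall x : N, exists2 e, e \in @mpg_arcs R G & asrc e = x.

Fixpoint is_walk (s : N) (es : seq A) : bool :=
  match es with
  | [::] => true
  | e :: es' => (e \in @mpg_arcs R G) && (asrc e == s) && is_walk (adst e) es'
  end.

Definition walk_nodes (s : N) (es : seq A) : seq N := s :: map adst es.

(* A history (s, es) is a walk from s that has not ended yet: its nodes
   v_0..v_t are pairwise distinct. *)
Definition history (s : N) (es : seq A) : bool :=
  is_walk s es && uniq (walk_nodes s es).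

(* A complete play from s: a walk that ends at the first t with v_t = v_t'
   for some t' < t. *)
Definition complete_play (s : N) (es : seq A) : bool :=
  [&& is_walk s es, (0 < size es)%N,
      uniq (take (size es) (walk_nodes s es)) &
      last s (map adst es) \in take (size es) (walk_nodes s es)].

(* Strategies map a history (start node, arcs so far) to an arc. *)
Definition strategy := N -> seq A -> A.

Definition valid_strategy1 (sigma : strategy) : Prop :=
  forall s es, history s es -> @mpg_owner1 R G (last s (map adst es)) ->
    sigma s es \in @mpg_arcs R G /\ asrc (sigma s es) = last s (map adst es).

Definition follows1 (sigma : strategy) (s : N) (es : seq A) : Prop :=
  forall i, (i < size es)%N ->
    @mpg_owner1 R G (nth s (walk_nodes s es) i) ->
    nth (sigma s (take i es)) es i = sigma s (take i es).

(* Winner of a complete play: t' is the first index of v_t; Player 0 wins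
   iff the mean weight of the cycle e_{t'+1} .. e_t is negative. *)
Definition player1_wins (s : N) (es : seq A) : Prop :=
  let t := size es in
  let t' := index (last s (map adst es)) (walk_nodes s es) in
  ~ ((\sum_(e <- drop t' es) awt e) / (t - t')%:R < 0).

Definition winning_start1 (s : N) : Prop :=
  exists sigma : strategy, valid_strategy1 sigma /\
    forall es, complete_play s es -> follows1 sigma s es -> player1_wins s es.

End Game.
Arguments winning_start1 {R} G s.
Arguments mpg_wf {R} G.

(* Nodes V, hyperarcs indexed by A; hyperarc a has tail (tl a), head set (hd a)
   and weights (w a v) for v in hd a. *)
Definition HyTN_wf (V A : finType) (tl : A -> V) (hd : A -> {set V}) : Prop :=
  forall a, hd a != set0 /\ tl a \notin hd a.

(* s(t_A) >= min_{v in H_A} (s v - w_A v); H_A is finite and nonempty, so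
   the minimum is attained by some v in H_A. *)
Definition feasible_scheduling (R : realFieldType) (V A : finType)
  (tl : A -> V) (hd : A -> {set V}) (w : A -> V -> R) (s : V -> R) : Prop :=
  forall a, exists2 v, v \in hd a & s v - w a v <= s (tl a).

Definition consistent (R : realFieldType) (V A : finType)
  (tl : A -> V) (hd : A -> {set V}) (w : A -> V -> R) : Prop :=
  exists s : V -> R, feasible_scheduling tl hd w s.

(* The associated game G_H: V_0 = V, V_1 = A. *)
Definition assoc_arcs (R : realFieldType) (V A : finType)
  (tl : A -> V) (hd : A -> {set V}) (w : A -> V -> R) : seq (arc (V + A)%type R) :=
  [seq (inl (tl a), inr a, 0) | a <- enum A] ++
  flatten [seq [seq (inr a, inl h, w a h) | h <- enum (hd a)] | a <- enum A].

Definition assoc_game (R : realFieldType) (V A : finType)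
  (tl : A -> V) (hd : A -> {set V}) (w : A -> V -> R) : MPG R :=
  {| mpg_node := (V + A)%type;
     mpg_owner1 := fun x => if x is inr _ then true else false;
     mpg_arcs := assoc_arcs tl hd w |}.

From Pilot Require Import Defs.
From HB Require Import structures.
From mathcomp Require Import all_boot all_order all_algebra.
From mathcomp Require Import ring.
Set Implicit Arguments. Unset Strict Implicit. Unset Printing Implicit Defensive.
Import Order.TTheory GRing.Theory Num.Theory.

(* A feasible scheduling s is a potential on G_H (the hyperarc node A gets the
   value s(t_A)) whose reduced weights w(e) + s(src e) - s(dst e) vanish on the
   arcs (t_A, A, 0) and are nonnegative on an arc (A, h, w_A(h)) for a head h
   attaining the minimum in the feasibility condition.  Let Player 1 always play
   such an arc.  The reduced weights telescope along a walk, so every cycle of a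
   play consistent with this strategy has nonnegative weight. *)

Local Open Scope ring_scope.

Section Walks.
Variables (R : realFieldType) (G : MPG R).
Local Notation N := (mpg_node G).
Local Notation arc := (Defs.arc N R).

Lemma is_walk_nth (s : N) (es : seq arc) d i : is_walk s es -> (i < size es)%N ->
  nth d es i \in @mpg_arcs R G /\ asrc (nth d es i) = nth s (walk_nodes s es) i.
Proof.
elim: es s i => [|e es IH] s [|i] //= /andP[/andP[e_arc /eqP e_src] es_walk] lti //=.
have [-> ->] := IH _ i es_walk lti; split=> //.
by apply: set_nth_default; rewrite /= ltnS size_map ltnW.
Qed.

Lemma is_walk_drop (s : N) (es : seq arc) k :
  is_walk s es -> (k <= size es)%N ->
  is_walk (nth s (walk_nodes s es) k) (drop k es) /\
  last (nth s (walk_nodes s es) k) (map adst (drop k es)) = last s (map adst es).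
Proof.
elim: es s k => [|e es IH] s [|k] //= /andP[_ es_walk] lek.
rewrite (set_nth_default (adst e)) /=; last by rewrite ltnS size_map.
exact: IH.
Qed.

Lemma last_take_walk_nodes (s : N) (es : seq arc) i : (i <= size es)%N ->
  last s (map adst (take i es)) = nth s (walk_nodes s es) i.
Proof.
elim: es s i => [|e es IH] s [|i] //= lei.
rewrite IH //; case: i lei => //= i lei.
by rewrite (set_nth_default (adst e)) // size_map.
Qed.

Definition reduced_weight (p : N -> R) (e : arc) := awt e + p (asrc e) - p (adst e).

Lemma walk_reduced_weight (p : N -> R) (s : N) (es : seq arc) : is_walk s es ->
  \sum_(e <- es) reduced_weight p e
    = \sum_(e <- es) awt e + p s - p (last s (map adst es)).
Proof.
elim: es s => [|e es IH] s /=; first by rewrite !big_nil addrK.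
case/andP=> /andP[_ /eqP e_src] es_walk.
rewrite !big_cons (IH _ es_walk) /reduced_weight -e_src.
by ring.
Qed.

(* No completeness of the play is needed: the last node of a walk always
   occurs among its nodes, so [drop t' es] is a closed walk. *)
Lemma player1_wins_reduced_ge0 (p : N -> R) (s : N) (es : seq arc) :
  is_walk s es -> all (fun e => 0 <= reduced_weight p e) es ->
  player1_wins s es.
Proof.
move=> es_walk es_ge0.
set L := last s (map adst es); set t' := index L (walk_nodes s es).
have L_in : L \in walk_nodes s es by exact: mem_last.
have lt't : (t' <= size es)%N by move: L_in; rewrite -index_mem /= size_map ltnS.
have nth_t' : nth s (walk_nodes s es) t' = L by rewrite nth_index.
have [cycle_walk cycle_last] := is_walk_drop es_walk lt't.
rewrite nth_t' in cycle_walk cycle_last.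
have cycle_ge0 : 0 <= \sum_(e <- drop t' es) awt e.
  have := walk_reduced_weight p cycle_walk; rewrite cycle_last addrK => <-.
  rewrite big_seq; apply: sumr_ge0 => e e_in.
  by move: es_ge0; rewrite -(cat_take_drop t' es) all_cat => /andP[_ /allP->].
rewrite /player1_wins -/L -/t'; apply/negP; rewrite -leNgt.
by apply: divr_ge0.
Qed.

Lemma follows1_nth (sigma : strategy G) (s : N) (es : seq arc) d i :
  is_walk s es -> follows1 sigma s es -> (i < size es)%N ->
  @mpg_owner1 R G (asrc (nth d es i)) ->
  nth d es i = sigma s (take i es) /\
  last s (map adst (take i es)) = asrc (nth d es i).
Proof.
move=> es_walk es_follows lti.
have [_ ->] := is_walk_nth d es_walk lti.
move=> own; rewrite last_take_walk_nodes ?(ltnW lti) //; split=> //.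
by rewrite (set_nth_default (sigma s (take i es))) // es_follows.
Qed.

Theorem winning_start1_potential (sigma : strategy G) (p : N -> R) :
  valid_strategy1 sigma ->
  (forall e, e \in @mpg_arcs R G -> ~~ @mpg_owner1 R G (asrc e) ->
     0 <= reduced_weight p e) ->
  (forall s es, @mpg_owner1 R G (last s (map adst es)) ->
     0 <= reduced_weight p (sigma s es)) ->
  forall s, winning_start1 G s.
Proof.
move=> sigma_valid arcs0_ge0 sigma_ge0 s; exists sigma; split=> // es.
case/and4P=> es_walk _ _ _ es_follows.
apply: (player1_wins_reduced_ge0 (p := p) es_walk).
apply/(all_nthP (sigma s [::])) => i lti.
have [e_arc _] := is_walk_nth (sigma s [::]) es_walk lti.
case own: (@mpg_owner1 R G (asrc (nth (sigma s [::]) es i))).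
- have [nth_i last_i] := follows1_nth es_walk es_follows lti own.
  by rewrite nth_i; apply: sigma_ge0; rewrite last_i own.
- exact: arcs0_ge0 e_arc (negbT own).
Qed.

End Walks.

Section AssociatedGame.
Variables (R : realFieldType) (V A : finType).
Variables (tl : A -> V) (hd : A -> {set V}) (w : A -> V -> R).
Local Notation GH := (assoc_game tl hd w).

Lemma mem_assoc_head_arc a h :
  h \in hd a -> (inr a, inl h, w a h) \in assoc_arcs tl hd w.
Proof.
move=> h_head; rewrite mem_cat; apply/orP; right.
by apply/flatten_mapP; exists a; rewrite ?mem_enum //; apply: map_f; rewrite mem_enum.
Qed.

Lemma assoc_arc_from_node e : e \in assoc_arcs tl hd w ->
  ~~ @mpg_owner1 R GH (asrc e) -> exists a, e = (inl (tl a), inr a, 0).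
Proof.
rewrite mem_cat => /orP[/mapP[a _ ->]|/flatten_mapP[a _ /mapP[h _ ->]]] //.
by exists a.
Qed.

Lemma feasible_head_choice (s : V -> R) : feasible_scheduling tl hd w s ->
  exists f : A -> V, forall a, f a \in hd a /\ s (f a) - w a (f a) <= s (tl a).
Proof.
move=> s_feas.
have head_ex a : exists v, v \in hd a /\ s v - w a v <= s (tl a).
  by have [v v_head le_v] := s_feas a; exists v.
exact: fin_all_exists head_ex.
Qed.

Definition tail_potential (s : V -> R) (x : mpg_node GH) : R :=
  match x with inl v => s v | inr a => s (tl a) end.

(* The value on histories ending in V is irrelevant. *)
Definition head_strategy (f : A -> V) : strategy GH := fun s0 es =>
  match last s0 (map adst es) with
  | inr a => (inr a, inl (f a), w a (f a))
  | inl v => (inl v, inl v, 0)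
  end.

Lemma head_strategy_valid (f : A -> V) :
  (forall a, f a \in hd a) -> valid_strategy1 (head_strategy f).
Proof.
move=> f_head s es _; rewrite /head_strategy.
by case: (last s _) => // a _; split=> //; apply: mem_assoc_head_arc.
Qed.

End AssociatedGame.

(* The hypotheses HyTN_wf and "every node is a tail" only guarantee that G_H
   is a genuine mean payoff game; this direction does not need them. *)
Theorem mainTheorem8 (R : realFieldType) (V A : finType)
  (tl : A -> V) (hd : A -> {set V}) (w : A -> V -> R) :
  HyTN_wf tl hd ->
  (forall v : V, exists a : A, tl a = v) ->
  consistent tl hd w ->
  forall x : mpg_node (assoc_game tl hd w),
    winning_start1 (assoc_game tl hd w) x.
Proof.
move=> _ _ [s s_feas].
have [f f_opt] := feasible_head_choice s_feas.
apply: (winning_start1_potential (sigma := head_strategy f) (p := tail_potential s)).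
- by apply: head_strategy_valid => a; case: (f_opt a).
- move=> e e_arc e_own; have [a ->] := assoc_arc_from_node e_arc e_own.
  by rewrite /reduced_weight /= add0r subrr.
- move=> s0 es; rewrite /head_strategy; case: (last s0 _) => // a _.
  by rewrite /reduced_weight /= subr_ge0 -lerBlDl; case: (f_opt a).
Qed.
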